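(* Let $\omega$ be a quasi-free Hadamard state of the free massless scalar field on four-dimensional Minkowski spacetime, and let $x$ be a point of Minkowski spacetime. Then $\omega$ is $\mathbf{T}_{2n}(x)$-thermal for all integers $n\geq 1$ if and only if it is $\mathbf{T}_{2}(x)$-thermal. As a consequence, a $\mathbf{T}_2(x)$-thermal quasi-free state has a sharp local temperature at $x$: any probability measure $\rho_x$ on $(0,\infty)$ witnessing its $\mathbf{T}_4(x)$-thermality is a Dirac measure.
   Context: Consider the free massless scalar field $\phi$ on Minkowski spacetime (signature $(-,+,+,+)$, units $k_B=1$). For $k\geq 0$ let $:\!\phi^{k}\!:(x)$ denote the Wick powers, defined by point splitting/normal ordering with respect to the Hadamard parametrix (in Minkowski spacetime no curvature renormalization terms appear). A state $\omega$ is quasi-free if its odd $n$-point functions vanish and its $2n$-point functions are given by the sum over all pairings of products of two-point functions; in a quasi-free Hadamard state $\omega(:\!\phi^{2n}\!:(x))=(2n-1)!!\,\omega(:\!\phi^2\!:(x))^n$. For $\beta>0$ let $\omega_\beta$ denote the (unique, quasi-free, translation-invariant) global thermal equilibrium (KMS) state at inverse temperature $\beta$ in a fixed Lorentz frame; it satisfies $\omega_\beta(:\!\phi^{2n}\!:(0))=\frac{(2n-1)!!}{12^n\beta^{2n}}$. For an integer $n\geq0$ let $\mathbf{T}_{2n}=\{\mathbf{1},:\!\phi^2\!:,\dots,:\!\phi^{2n}\!:\}$. A state $\omega$ is called $\mathbf{T}_{2n}(x)$-thermal if there exists a probability measure $\rho_x$ on $(0,\infty)$ such that $\omega(:\!\phi^{2k}\!:(x))=\int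 d\rho_x(\beta)\,\omega_\beta(:\!\phi^{2k}\!:(0))$ for all $k=0,1,\dots,n$ (with the integrals finite). The state is said to have a sharp local temperature at $x$ if the measure $\rho_x$ is a Dirac measure. *)

From HB Require Import structures.
From mathcomp Require Import all_boot all_order all_algebra.
From mathcomp Require Import all_classical all_reals all_analysis.
Set Implicit Arguments. Unset Strict Implicit. Unset Printing Implicit Defensive.
Import Order.TTheory GRing.Theory Num.Theory.
Local Open Scope classical_set_scope.
Local Open Scope ring_scope.

(* odd double factorial: dfact n = (2n-1)!! = 1 * 3 * ... * (2n-1); dfact 0 = 1 *)
Definition dfact (n : nat) : nat := \prod_(i < n) (2 * i + 1)%N.

(* Wick-power data of a state at a fixed point x:
   wick k = omega(:phi^k:(x)).  A quasi-free Hadamard state satisfies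
   omega(:phi^{2n}:(x)) = (2n-1)!! omega(:phi^2:(x))^n (and omega(1) = 1). *)
Definition quasi_free_wick (R : realType) (wick : nat -> R) : Prop :=
  forall n : nat, wick (2 * n)%N = (dfact n)%:R * wick 2%N ^+ n.

Definition pos_reals (R : realType) : set R := `]0, +oo[%classic.

(* omega_beta(:phi^{2n}:(0)) = (2n-1)!! / (12^n beta^{2n}) *)
Definition thermal_val (R : realType) (n : nat) (beta : R) : R :=
  (dfact n)%:R / (12%:R ^+ n * beta ^+ (2 * n)).

(* rho (a probability measure on R concentrated on (0,oo)) witnesses
   T_{2n}(x)-thermality of the state with Wick data wick *)
Definition thermal_witness (R : realType) (wick : nat -> R) (n : nat)
    (rho : probability R R) : Prop :=
  rho (@pos_reals R) = 1%E /\
  forall k : nat, (k <= n)%N ->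
    rho.-integrable (@pos_reals R) (fun b => (thermal_val k b)%:E) /\
    (\int[rho]_(b in (@pos_reals R)) (thermal_val k b)%:E = (wick (2 * k)%N)%:E)%E.

Definition T_thermal (R : realType) (wick : nat -> R) (n : nat) : Prop :=
  exists rho : probability R R, thermal_witness wick n rho.

Definition is_dirac (R : realType) (rho : probability R R) : Prop :=
  exists beta : R, 0 < beta /\
    forall A : set R, measurable A -> rho A = \d_beta A.

From HB Require Import structures.
From mathcomp Require Import all_boot all_order all_algebra.
From mathcomp Require Import all_classical all_reals all_analysis.
From mathcomp Require Import measurable_realfun ring.
Set Implicit Arguments.
Unset Strict Implicit.
Unset Printing Implicit Defensive.
Import Order.TTheory GRing.Theory Num.Theory.
Import numFieldNormedType.Exports.
Local Open Scope classical_set_scope.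
Local Open Scope ring_scope.

(* Write c = omega(:phi^2:(x)) and X(beta) = 1/(12 beta^2), so that the thermal
   value of :phi^{2k}: is (2k-1)!! X^k and, by quasi-freeness,
   omega(:phi^{2k}:(x)) = (2k-1)!! c^k.  A T_2 witness gives c = E[X] > 0, and
   then the Dirac measure at the beta with X(beta) = c reproduces every Wick
   power.  A T_4 witness rho has E[X] = c and E[X^2] = c^2, i.e. X has variance
   zero under rho; so X = c rho-a.e., and since X is injective on (0, oo), rho
   is the Dirac measure at the corresponding beta. *)

Section probability_ae.
Context d (T : measurableType d) (R : realType) (mu : probability T R).
Variable D : set T.
Hypotheses (mD : measurable D) (muD : mu D = 1%E).

Lemma ae_prob1 : \forall x \ae mu, D x.
Proof.
change (mu.-negligible (~` D)); apply/negligibleP; first exact: measurableC.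
by apply: eq_trans (probability_setC mu mD) _; rewrite muD subee.
Qed.

Lemma ae_in_exists (P : T -> Prop) :
  (\forall x \ae mu, D x -> P x) -> exists2 x, D x & P x.
Proof.
have muT : (0 < mu setT)%E by rewrite probability_setT lte01.
have ae_proper := ae_properfilter_algebraOfSetsType muT.
move=> DP; have [x [Dx /(_ Dx) Px]] := filter_ex (filterI ae_prob1 DP).
by exists x.
Qed.

Lemma integral_ge0_eq0_ae (h : T -> R) :
  measurable_fun D h -> (forall x, D x -> 0 <= h x) ->
  (\int[mu]_(x in D) (h x)%:E = 0)%E -> \forall x \ae mu, D x -> h x = 0.
Proof.
move=> mh h0 ih0.
have /(ae_eq_integral_abs mu mD) : (\int[mu]_(x in D) `|(h x)%:E| = 0)%E.
  rewrite -ih0; apply: eq_integral => x /[!inE] Dx.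
  by rewrite gee0_abs // lee_fin h0.
move=> /(_ ((measurable_EFinP _ _).2 mh)); apply: filterS => x hx0 Dx.
by have [] := hx0 Dx.
Qed.

Lemma integral_prob1_gt0 (h : T -> R) :
  measurable_fun D h -> (forall x, D x -> 0 < h x) ->
  (0 < \int[mu]_(x in D) (h x)%:E)%E.
Proof.
move=> mh h0; rewrite lt0e integral_ge0 ?andbT; last first.
  by move=> x Dx; rewrite lee_fin ltW ?h0.
apply/eqP => /(integral_ge0_eq0_ae mh (fun x Dx => ltW (h0 x Dx))).
by move=> /ae_in_exists[x Dx hx0]; move: (h0 x Dx); rewrite hx0 ltxx.
Qed.

Lemma variance_eq0_ae (f : T -> R) (c : R) :
  measurable_fun D f ->
  mu.-integrable D (fun x => (f x)%:E) ->
  mu.-integrable D (fun x => (f x ^+ 2)%:E) ->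
  (\int[mu]_(x in D) (f x)%:E = c%:E)%E ->
  (\int[mu]_(x in D) (f x ^+ 2)%:E = (c ^+ 2)%:E)%E ->
  \forall x \ae mu, D x -> f x = c.
Proof.
move=> mf if1 if2 ef1 ef2.
have mdev : measurable_fun D (fun x => (f x - c) ^+ 2).
  by apply/measurable_funX/measurable_funB => //; exact: measurable_cst.
have devE x : ((f x - c) ^+ 2)%:E =
    ((f x ^+ 2)%:E + (- (2 * c))%:E * (f x)%:E + cst (c ^+ 2)%:E x)%E.
  by rewrite -!EFinM -!EFinD; congr EFin; ring.
have iZ := integrableZl mD (- (2 * c)) if1.
have iC := finite_measure_integrable_cst mu (c ^+ 2) mD.
have : (\int[mu]_(x in D) ((f x - c) ^+ 2)%:E = 0)%E.
  under eq_integral do rewrite devE.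
  rewrite (integralD mD (integrableD mD if2 iZ) iC) (integralD mD if2 iZ).
  rewrite (integralZl mD if1) ef1 ef2.
  rewrite (_ : (fun x => (EFin \o cst (c ^+ 2)) x) = cst (c ^+ 2)%:E) //.
  rewrite integral_cst // (muD : (mu : measure T R) D = 1%E).
  by rewrite -!EFinM -!EFinD; congr EFin; ring.
move/(integral_ge0_eq0_ae mdev (fun x _ => sqr_ge0 _)); apply: filterS.
by move=> x dev0 /dev0 /eqP; rewrite sqrf_eq0 subr_eq0 => /eqP.
Qed.

End probability_ae.

Lemma ae_eq_dirac d (T : measurableType d) (R : realType)
    (mu : probability T R) (a : T) :
  measurable [set a] -> (\forall x \ae mu, x = a) ->
  forall A, measurable A -> mu A = \d_a A.
Proof.
move=> ma ae_a A mA; have mCa := measurableC ma.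
have muCa0 : mu (~` [set a]) = 0%E := measure_negligible mCa ae_a.
rewrite diracE; have [Aa | nAa] := boolP (a \in A).
  rewrite -(measureU0 mA mCa muCa0) (_ : _ `|` _ = setT).
    exact: probability_setT.
  apply/seteqP; split => // x _.
  by have [->|] := pselect (x = a); [left; exact: set_mem | right].
apply: subset_measure0 mA mCa _ muCa0 => x Ax xa.
by move/negP: nAa; apply; rewrite -xa inE.
Qed.

Lemma dfact_gt0 n : (0 < dfact n)%N.
Proof. by apply: prodn_gt0 => i; rewrite addn1. Qed.

Section thermal_values.
Variable R : realType.
Local Notation P := (@pos_reals R).

Lemma pos_realsP (b : R) : P b <-> 0 < b.
Proof. by rewrite /pos_reals /= in_itv /= andbT. Qed.

Lemma measurable_pos_reals : measurable P.
Proof. exact: measurable_itv. Qed.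

Lemma thermal_val1E (b : R) : thermal_val 1 b = (12%:R * b ^+ 2)^-1.
Proof. by rewrite /thermal_val /dfact big_ord1 mul1r. Qed.

Lemma thermal_valE k (b : R) :
  thermal_val k b = (dfact k)%:R * thermal_val 1 b ^+ k.
Proof. by rewrite thermal_val1E exprVn exprMn -exprM. Qed.

Lemma thermal_val1_gt0 (b : R) : 0 < b -> 0 < thermal_val 1 b.
Proof.
by move=> b0; rewrite thermal_val1E invr_gt0 mulr_gt0 ?exprn_gt0 ?ltr0n.
Qed.

Lemma thermal_val1_inj (b b' : R) :
  0 < b -> 0 < b' -> thermal_val 1 b = thermal_val 1 b' -> b = b'.
Proof.
move=> b0 b'0; rewrite !thermal_val1E => /invr_inj /mulfI.
by rewrite pnatr_eq0 => /(_ isT) /eqP; rewrite eqrXn2 ?ltW // => /eqP.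
Qed.

Lemma thermal_val1_onto (c : R) :
  0 < c -> exists2 b, 0 < b & thermal_val 1 b = c.
Proof.
move=> c0; exists (Num.sqrt (12%:R * c)^-1).
  by rewrite sqrtr_gt0 invr_gt0 mulr_gt0 ?ltr0n.
rewrite thermal_val1E sqr_sqrtr ?invr_ge0 ?mulr_ge0 ?ler0n ?ltW //.
by rewrite invfM invrK mulKf ?pnatr_eq0.
Qed.

Lemma measurable_thermal_val k : measurable_fun P (@thermal_val R k).
Proof.
apply: open_continuous_measurable_fun; first exact: interval_open.
move=> b /set_mem /pos_realsP b0.
have -> : @thermal_val R k = cst (dfact k)%:R \*
    (fun b => ((cst (12%:R ^+ k) \* (fun b : R => b ^+ (2 * k))) b)^-1).
  by apply: funext.
have den0 : (cst (12%:R ^+ k) \* (fun b : R => b ^+ (2 * k))) b != 0.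
  by rewrite mulf_neq0 ?expf_neq0 ?pnatr_eq0 ?gt_eqF.
by apply: continuousM (cvg_cst _) (continuousV den0
  (continuousM (cvg_cst _) (@exprn_continuous R _ b))).
Qed.

End thermal_values.

Section thermality.
Variables (R : realType) (wick : nat -> R).
Local Notation P := (@pos_reals R).

Lemma thermal_witness_dirac n (beta : R) : 0 < beta ->
  (forall k, (k <= n)%N -> wick (2 * k) = thermal_val k beta) ->
  thermal_witness wick n \d_beta.
Proof.
move=> /pos_realsP Pbeta wickE; split.
  by have := diracE R beta P; rewrite mem_set // => <-.
move=> k kn.
have mk : measurable_fun P (fun b => (thermal_val k b)%:E).
  by apply/measurable_EFinP; exact: measurable_thermal_val.
have intE : (\int[\d_beta]_(b in P) (thermal_val k b)%:E =
              (thermal_val k beta)%:E)%E.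
  rewrite integral_dirac //; last exact: measurable_pos_reals.
  by rewrite diracE mem_set // mul1e.
split; last by rewrite intE wickE.
apply/integrableP; split => //.
rewrite integral_dirac; [|exact: measurable_pos_reals|exact: measurableT_comp].
by rewrite diracE mem_set // mul1e ltry.
Qed.

Lemma quasi_free_wickE (beta : R) : quasi_free_wick wick ->
  thermal_val 1 beta = wick 2 -> forall k, wick (2 * k) = thermal_val k beta.
Proof. by move=> hqf tv1 k; rewrite hqf thermal_valE tv1. Qed.

Lemma T_thermal1_wick2_gt0 : T_thermal wick 1 -> 0 < wick 2.
Proof.
case=> rho [rhoP /(_ 1%N isT) [_ e1]].
rewrite -lte_fin -e1; apply: (integral_prob1_gt0 _ rhoP).
- exact: measurable_pos_reals.
- exact: measurable_thermal_val.
- by move=> b /pos_realsP; exact: thermal_val1_gt0.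
Qed.

Lemma quasi_free_T_thermal : quasi_free_wick wick ->
  0 < wick 2 -> forall n, T_thermal wick n.
Proof.
move=> hqf /thermal_val1_onto[beta beta0 tv1] n; exists \d_beta.
by apply: thermal_witness_dirac => // k _; exact: quasi_free_wickE.
Qed.

Lemma thermal_witness2_dirac (rho : probability R R) :
  quasi_free_wick wick -> thermal_witness wick 2 rho -> is_dirac rho.
Proof.
move=> hqf [rhoP wit]; have [i1 e1] := wit 1%N isT; have [i2 e2] := wit 2%N isT.
have mP := @measurable_pos_reals R.
pose X := @thermal_val R 1.
have sqXE b : ((X b ^+ 2)%:E = ((dfact 2)%:R^-1)%:E * (thermal_val 2 b)%:E)%E.
  by rewrite thermal_valE -EFinM mulKf // pnatr_eq0 -lt0n dfact_gt0.
have iX2 : rho.-integrable P (fun b => (X b ^+ 2)%:E).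
  by apply: eq_integrable mP _ _ _ (integrableZl mP _ i2) => b _; rewrite sqXE.
have eX2 : (\int[rho]_(b in P) (X b ^+ 2)%:E = (wick 2 ^+ 2)%:E)%E.
  under eq_integral do rewrite sqXE.
  by rewrite integralZl // e2 hqf -EFinM mulKf // pnatr_eq0 -lt0n dfact_gt0.
have aeX := variance_eq0_ae mP rhoP (measurable_thermal_val 1) i1 iX2 e1 eX2.
have [b0 Pb0 Xb0] := ae_in_exists mP rhoP aeX.
exists b0; split; first exact/pos_realsP.
apply: ae_eq_dirac (measurable_set1 b0) _.
apply: filterS2 (ae_prob1 mP rhoP) aeX => b Pb /(_ Pb) Xb.
by apply: thermal_val1_inj; rewrite -?pos_realsP // Xb Xb0.
Qed.

End thermality.

Theorem proposition1 (R : realType) (wick : nat -> R)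
    (hqf : quasi_free_wick wick) :
  ((forall n : nat, (1 <= n)%N -> T_thermal wick n) <-> T_thermal wick 1) /\
  (T_thermal wick 1 ->
     forall rho : probability R R, thermal_witness wick 2 rho -> is_dirac rho).
Proof.
split; last by move=> _ rho; exact: thermal_witness2_dirac.
split=> [thermal | /T_thermal1_wick2_gt0 wick2_gt0 n _]; first exact: thermal.
exact: quasi_free_T_thermal.
Qed.
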